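(* Let $(\mathcal N,\mathcal E)$ be a connected undirected graph on $\mathcal N=\{1,\dots,n\}$ and $W$ a symmetric stochastic matrix with $w_{ij}=0$ for $i\ne j$, $(i,j)\notin\mathcal E$, $w_{ii}>1/2$ for all $i$, and $w_{ij}$ rational in $(0,1)$ for $(i,j)\in\mathcal E$. Let $\mathbb N(t)=(\mathcal N,\mathcal E(t))$, $\mathcal E(t)\subseteq\mathcal E$, be random undirected graphs with $\Pr[(i,j)\in\mathcal E(t)\mid\sigma(\mathbb N(1),\dots,\mathbb N(t-1))]\ge p$ for all $t$, all $(i,j)\in\mathcal E$, for a constant $p>0$; define $w_{ij}(t)=w_{ij}$ if $(i,j)\in\mathcal E(t)$, $0$ otherwise ($i\ne j$), and $w_{ii}(t)=1-\sum_{j\ne i}w_{ij}(t)$. For each $i$ let $x_i(1),x_i(2),\dots$ be i.i.d. samples of $X_i$ with $|X_i|\le K$, $\bar x_i=E[X_i]$, $z_i(t)=\frac1t\sum_{\tau\le t}x_i(\tau)$. Fix $\Delta>0$, let $\mathcal B=\{k\Delta+\Delta/2:k=0,1,\dots\}$, $\mathcal R(x)$ the multiple $k\Delta$ ($k=0,1,\dots$) nearest to $x$ with $\mathcal R(k\Delta+\Delta/2)=(k+1)\Delta$, $\tilde z_i(t)=\mathcal R(z_i(t))$, $\Delta\tilde z(t+1)=\tilde z(t+1)-\tilde z(t)$. Let $\mathcal Q$ be the element-wise truncation, ceiling, or rounding-to-integer quantizer and let $$y(t+1)=W(t)\mathcal Q(y(t))+y(t)-\mathcal Q(y(t))+\Delta\tilde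 z(t+1),\qquad t=1,2,\dots.$$ If $\bar x_i\notin\mathcal B$ for all $i$, then almost surely there is a finite set containing $y_i(t)$ for all $t\in\{1,2,\dots\}$ and all $i\in\mathcal N$. *)

From HB Require Import structures.
From mathcomp Require Import all_boot all_order all_algebra.
From mathcomp Require Import all_classical all_reals all_analysis.
Set Implicit Arguments. Unset Strict Implicit. Unset Printing Implicit Defensive.
Import Order.TTheory GRing.Theory Num.Theory.
Import numFieldNormedType.Exports.
Local Open Scope classical_set_scope.
Local Open Scope ring_scope.

Inductive quantizer := Truncation | Ceiling | Rounding.

Definition quant {R : realType} (q : quantizer) (x : R) : R :=
  match q with
  | Truncation => (Num.floor x)%:~R
  | Ceiling => (Num.ceil x)%:~R
  | Rounding => (Num.floor (x + 2^-1))%:~R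
  end.

Definition roundD {R : realType} (D x : R) : R :=
  D * (Num.max 0 (Num.floor (x / D + 2^-1)))%:~R.

Definition boundary_set {R : realType} (D : R) : set R :=
  [set x | exists k : nat, x = k%:R * D + D / 2].

Definition undirected_graph n (E : rel 'I_n) :=
  (forall i j, E i j = E j i) /\ (forall i, ~~ E i i).
Definition connected_graph n (E : rel 'I_n) := forall i j, connect E i j.

Definition weight_matrix_ok {R : realType} n (E : rel 'I_n) (W : 'M[R]_n) :=
  [/\ W^T = W,
      (forall i j, 0 <= W i j) /\ (forall i, \sum_(j < n) W i j = 1),
      (forall i j, i != j -> ~~ E i j -> W i j = 0),
      (forall i, W i i > 2^-1) &
      (forall i j, E i j -> and (exists q : rat, W i j = ratr q) (0 < W i j < 1))].

Definition weight_t {R : realType} n (W : 'M[R]_n) (Et : {set 'I_n * 'I_n}) : 'M[R]_n :=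
  \matrix_(i, j)
    if i == j then 1 - \sum_(k | k != i) (if (i, k) \in Et then W i k else 0)
    else (if (i, j) \in Et then W i j else 0).

(* z(t) = (1/t) sum_{tau = 1}^t x(tau), where xs k stands for x(k+1). *)
Definition smean {R : realType} (xs : nat -> R) (t : nat) : R :=
  (t%:R)^-1 * \sum_(k < t) xs k.

(* y(s+1) in the paper's indexing (s = 0,1,...):
   G s stands for E(s+1), xs i k for x_i(k+1), y1 = y(1). *)
Fixpoint ytraj {R : realType} n (q : quantizer) (D : R) (W : 'M[R]_n)
    (G : nat -> {set 'I_n * 'I_n}) (xs : 'I_n -> nat -> R) (y1 : 'cV[R]_n)
    (s : nat) : 'cV[R]_n :=
  match s with
  | 0 => y1
  | s'.+1 =>
      let y := ytraj q D W G xs y1 s' in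
      weight_t W (G s') *m map_mx (quant q) y + y - map_mx (quant q) y
      + \col_i (roundD D (smean (xs i) s'.+2) - roundD D (smean (xs i) s'.+1))
  end.

(* history (N(1),...,N(t)) of the random graphs, G s = N(s+1) *)
Definition history {T : Type} n (G : nat -> T -> {set 'I_n * 'I_n}) (t : nat)
  (w : T) : seq {set 'I_n * 'I_n} := map (fun s => G s w) (iota 0 t).

Definition mutually_independent {d} {T : measurableType d} {R : realType}
  (P : probability T R) (X : nat -> T -> R) :=
  forall (N : nat) (B : nat -> set R), (forall k, measurable (B k)) ->
    P (\bigcap_(k in [set k | (k < N)%N]) (X k @^-1` B k)) =
    (\prod_(k < N) P (X k @^-1` B k))%E.

Definition identically_distributed {d} {T : measurableType d} {R : realType}
  (P : probability T R) (X Y : T -> R) :=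
  forall B : set R, measurable B -> P (X @^-1` B) = P (Y @^-1` B).

(* Once every rounded running mean has stopped moving, the recursion reads
   y(t+1) = W(t) Q(y(t)) + y(t) - Q(y(t)).  Each W(t) is stochastic and the
   error y - Q(y) stays in the rounding cell of the quantizer, so the integers
   Q(y_i(t)) remain between the extreme values they had when the means froze;
   this bounds y(t).  The increments of y are integer combinations of the
   rational off-diagonal weights, so y(t) - y(T0) stays in the lattice
   M^-1 Z^n for a common denominator M, and a bounded part of a lattice is
   finite.
   The means do freeze almost surely: since E[X_i] is off the boundary set,
   rounding is constant near it, and the running mean eventually stays near
   E[X_i].  That strong law for bounded i.i.d. samples follows from a Chernoff
   bound and Borel-Cantelli for the empirical frequencies of finitely many
   level sets of X_i. *)

From HB Require Import structures.
From mathcomp Require Import all_boot all_order all_algebra.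
From mathcomp Require Import all_classical all_reals all_analysis.
From mathcomp Require Import ring lra.
Set Implicit Arguments. Unset Strict Implicit. Unset Printing Implicit Defensive.
Import Order.TTheory GRing.Theory Num.Theory.
Import numFieldNormedType.Exports.
Local Open Scope classical_set_scope.
Local Open Scope ring_scope.

Section quantizer.
Context {R : realType}.

Definition quantz (q : quantizer) (x : R) : int :=
  match q with
  | Truncation => Num.floor x
  | Ceiling => Num.ceil x
  | Rounding => Num.floor (x + 2^-1)
  end.

Lemma quantE q (x : R) : quant q x = (quantz q x)%:~R.
Proof. by case: q. Qed.

Lemma dist_quant_le1 q (x : R) : `|x - quant q x| <= 1.
Proof.
rewrite quantE ler_norml; case: q => /=.
- by have := floor_itv x; rewrite intrD => /andP[h1 h2]; apply/andP; split; lra.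
- by have := ceil_itv x; rewrite intrB => /andP[h1 h2]; apply/andP; split; lra.
- by have := floor_itv (x + 2^-1); rewrite intrD => /andP[h1 h2]; apply/andP; split; lra.
Qed.

Lemma floor_between (lo hi : int) (x : R) :
  lo%:~R <= x -> x < hi%:~R + 1 -> lo <= Num.floor x <= hi.
Proof. by move=> h1 h2; rewrite floor_ge_int h1 -ltzD1 floor_lt_int intrD. Qed.

(* The error [y - quant q y] lies in the cell [0, 1), (-1, 0] or [-1/2, 1/2)
   of the quantizer, so adding it to [c] cannot push [quantz q] past an
   integer bound of [c]. *)
Lemma quantz_shift_between q (lo hi : int) (c y : R) : lo%:~R <= c <= hi%:~R ->
  lo <= quantz q (c + (y - quant q y)) <= hi.
Proof.
move=> /andP[cl ch]; rewrite quantE; case: q => /=.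
- by have := floor_itv y; rewrite intrD => /andP[h1 h2]; apply: floor_between; lra.
- have := ceil_itv y; rewrite intrB => /andP[h1 h2].
  by rewrite ceil_le_int -ltzD1 -ltrBlDr ceil_gt_int intrB; apply/andP; split; lra.
- have := floor_itv (y + 2^-1); rewrite intrD => /andP[h1 h2].
  by apply: floor_between; lra.
Qed.

End quantizer.

Lemma convex_combination_between {R : numDomainType} {n} (w v : 'I_n -> R) (lo hi : R) :
  (forall j, 0 <= w j) -> \sum_j w j = 1 -> (forall j, lo <= v j <= hi) ->
  lo <= \sum_j w j * v j <= hi.
Proof.
move=> w0 w1 hv; have sumc c : c = \sum_j w j * c by rewrite -mulr_suml w1 mul1r.
apply/andP; split; [rewrite [X in X <= _](sumc lo) | rewrite [X in _ <= X](sumc hi)];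
  by apply: ler_sum => j _; apply: ler_wpM2l => //; case/andP: (hv j).
Qed.

Lemma bounded_lattice_finite {R : archiFieldType} {M : nat} (C : nat) (c : R) :
  (0 < M)%N ->
  exists S : seq R, forall y, M%:R * (y - c) \is a Num.int -> `|y - c| <= C%:R ->
    y \in S.
Proof.
move=> M0; have Mpos : 0 < (M%:R : R) by rewrite ltr0n.
exists [seq c + (z%:R - (M * C)%:R) / M%:R | z <- iota 0 (M * C + M * C).+1].
move=> y /intrP[m Hm] yC; apply/mapP.
have mb : `|m| <= (M * C)%:Z.
  by rewrite -(ler_int R) intr_norm -pmulrn -Hm normrM ger0_norm ?ler0n // natrM ler_pM2l.
have /andP[mlo mhi] : - (M * C)%:Z <= m <= (M * C)%:Z by rewrite -ler_norml.
have m0 : 0 <= m + (M * C)%:Z by rewrite -lerBlDr sub0r.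
exists (absz (m + (M * C)%:Z)).
  by rewrite mem_iota add0n leq0n ltnS -lez_nat abszE ger0_norm // PoszD lerD2r.
rewrite natr_absz ger0_norm // intrD addrK -Hm mulrAC mulfV ?gt_eqF //.
by rewrite mul1r addrC subrK.
Qed.

Section weights.
Context {R : realType} {n : nat} {E : rel 'I_n} {W : 'M[R]_n}.
Hypothesis Wok : weight_matrix_ok E W.

Lemma weight_t_offdiag (Et : {set 'I_n * 'I_n}) i j : i != j ->
  weight_t W Et i j = if (i, j) \in Et then W i j else 0.
Proof. by move=> ij; rewrite mxE (negbTE ij). Qed.

Lemma weight_t_ge0 (Et : {set 'I_n * 'I_n}) i j : 0 <= weight_t W Et i j.
Proof.
case: Wok => _ [W0 W1] _ _ _; have [<-|ij] := eqVneq i j; last first.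
  by rewrite weight_t_offdiag //; case: ifP.
rewrite mxE eqxx subr_ge0; apply: (@le_trans _ _ (\sum_(k | k != i) W i k)).
  by apply: ler_sum => k _; case: ifP.
by rewrite -(W1 i) [leRHS](bigD1 i) //= lerDr.
Qed.

Lemma weight_t_row_sum (Et : {set 'I_n * 'I_n}) i : \sum_j weight_t W Et i j = 1.
Proof.
rewrite (bigD1 i) //= mxE eqxx.
by under [X in _ + X]eq_bigr => k ki do rewrite weight_t_offdiag 1?eq_sym //; rewrite subrK.
Qed.

Lemma weight_t_common_denominator : exists2 M : nat, (0 < M)%N &
  forall Et i j, i != j -> M%:R * weight_t W Et i j \is a Num.int.
Proof.
have denom (ij : 'I_n * 'I_n) : exists2 m : nat, (0 < m)%N &
    (ij.1 != ij.2 -> m%:R * W ij.1 ij.2 \is a Num.int).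
  case: ij => i j /=; case: Wok => _ _ W0 _ Wq.
  have [eij|neij] := boolP (E i j); last first.
    by exists 1%N => // ij; rewrite W0 // mulr0.
  have [[r ->] _] := Wq i j eij.
  exists `|denq r|%N; first by rewrite absz_gt0 denq_neq0.
  move=> _; rewrite natr_absz gtr0_norm ?denq_gt0 // /ratr mulrCA mulfV ?mulr1 //.
  by rewrite intr_eq0 denq_neq0.
have [m mpos mW] := fin_all_exists2 denom.
exists (\prod_ij m ij); first by apply: prodn_gt0.
move=> Et i j ij; rewrite weight_t_offdiag //; case: ifP => _; last by rewrite mulr0.
rewrite (bigD1 (i, j)) //= natrM mulrAC mulrC.
by apply: rpredM; [exact: natr_int | exact: mW].
Qed.

End weights.

Section trajectory.
Context {R : realType} {n : nat} {E : rel 'I_n} {W : 'M[R]_n} {q : quantizer}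
  {D : R} {G : nat -> {set 'I_n * 'I_n}} {xs : 'I_n -> nat -> R} {y1 : 'cV[R]_n}.
Hypothesis Wok : weight_matrix_ok E W.

Local Notation y t i := (ytraj q D W G xs y1 t i ord0).

Lemma ytrajS t i : y t.+1 i =
  \sum_j weight_t W (G t) i j * quant q (y t j) + (y t i - quant q (y t i))
  + (roundD D (smean (xs i) t.+2) - roundD D (smean (xs i) t.+1)).
Proof.
rewrite /= !mxE; congr (_ + _); rewrite -addrA; congr (_ + _).
by apply: eq_bigr => j _; congr (_ * _); rewrite mxE.
Qed.

Variables (T0 : nat) (zr : 'I_n -> R).
Hypothesis rounded_means_frozen :
  forall i t, (T0 <= t)%N -> roundD D (smean (xs i) t.+1) = zr i.

Lemma ytrajS_frozen t i : (T0 <= t)%N ->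
  y t.+1 i = \sum_j weight_t W (G t) i j * quant q (y t j) + (y t i - quant q (y t i)).
Proof.
move=> Tt; rewrite ytrajS !rounded_means_frozen ?subrr ?addr0 //; exact: leqW.
Qed.

Lemma ytrajS_frozen_increment t i : (T0 <= t)%N ->
  y t.+1 i - y t i = \sum_j weight_t W (G t) i j * (quant q (y t j) - quant q (y t i)).
Proof.
move=> Tt; rewrite ytrajS_frozen //.
under [RHS]eq_bigr do rewrite mulrBr.
by rewrite sumrB -mulr_suml weight_t_row_sum // mul1r; ring.
Qed.

Lemma quantz_ytraj_between {lo hi : int} :
  (forall j, lo <= quantz q (y T0 j) <= hi) ->
  forall t j, (T0 <= t)%N -> lo <= quantz q (y t j) <= hi.
Proof.
move=> base t j /subnKC <-; elim: (t - T0)%N j => [|k IH] j; first by rewrite addn0.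
rewrite addnS ytrajS_frozen ?leq_addr //; apply: quantz_shift_between.
under eq_bigr do rewrite quantE.
apply: convex_combination_between => [l||l]; first exact: (weight_t_ge0 Wok _ j l).
  exact: weight_t_row_sum.
by rewrite !ler_int.
Qed.

Lemma ytraj_bounded : exists C : nat, forall t i, (T0 <= t)%N -> `|y t i| <= C%:R.
Proof.
pose B := (\sum_j `|quantz q (y T0 j)|%N)%N.
have base j : - B%:Z <= quantz q (y T0 j) <= B%:Z.
  by rewrite -ler_norml -abszE lez_nat /B (bigD1 j) //= leq_addr.
exists B.+1 => t i Tt; rewrite -natr1.
have /andP[lo hi] := quantz_ytraj_between base i Tt.
have := dist_quant_le1 q (y t i); rewrite quantE.
have : `|(quantz q (y t i))%:~R| <= B%:R :> R.
  by rewrite -intr_norm -[B%:R]/(B%:Z%:~R) ler_int ler_norml lo hi.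
move: (quantz q (y t i))%:~R => z hz hyz; rewrite -[y t i](subrK z) addrC.
exact: le_trans (ler_normD _ _) (lerD hz hyz).
Qed.

Lemma ytraj_lattice : exists2 M : nat, (0 < M)%N &
  forall t i, (T0 <= t)%N -> M%:R * (y t i - y T0 i) \is a Num.int.
Proof.
have [M M0 HM] := weight_t_common_denominator Wok.
exists M => // t i /subnKC <-; elim: (t - T0)%N => [|k IH]; first by rewrite addn0 subrr mulr0.
rewrite addnS -[y _.+1 i](subrK (y (T0 + k) i)) -addrA mulrDr rpredD //.
rewrite ytrajS_frozen_increment ?leq_addr // mulr_sumr; apply: rpred_sum => j _.
have [<-|ij] := eqVneq i j; first by rewrite subrr !mulr0 rpred0.
by rewrite mulrA rpredM ?HM // !quantE rpredB ?intr_int.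
Qed.

Lemma ytraj_finite_range : exists S : seq R, forall t i, y t i \in S.
Proof.
have [C HC] := ytraj_bounded; have [M M0 HM] := ytraj_lattice.
have tail_in i : exists S : seq R, forall t, (T0 <= t)%N -> y t i \in S.
  have [S HS] := bounded_lattice_finite (C + C) (y T0 i) M0.
  exists S => t Tt; apply: HS; first exact: HM.
  by rewrite natrD; apply: le_trans (ler_normB _ _) (lerD (HC _ _ Tt) (HC _ _ _)).
have [S HS] := fin_all_exists tail_in.
exists ([seq y t i | t <- iota 0 T0, i <- enum 'I_n] ++ flatten [seq S i | i <- enum 'I_n]).
move=> t i; rewrite mem_cat; have [tT|Tt] := ltnP t T0.
  by rewrite (allpairs_f (fun t i => y t i)) ?mem_iota ?mem_enum.
by apply/orP; right; apply/flattenP; exists (S i); [rewrite map_f ?mem_enum | exact: HS].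
Qed.

End trajectory.

Section stair.
Context {R : realFieldType}.

Definition stair (b e x : R) n : R := \sum_(l < n) (b + l.+1%:R * e <= x)%R%:R.

Lemma stairS (b e x : R) n : stair b e x n.+1 = stair b e x n + (b + n.+1%:R * e <= x)%R%:R.
Proof. by rewrite /stair big_ord_recr. Qed.

Lemma stair_le (b e x : R) n : stair b e x n <= n%:R.
Proof.
elim: n => [|n IH]; first by rewrite /stair big_ord0.
by rewrite stairS -natr1 lerD // lern1 leq_b1.
Qed.

Lemma stair_full (b e x : R) n : 0 < e -> b + n%:R * e <= x -> stair b e x n = n%:R.
Proof.
move=> e0; elim: n => [|n IH] h; first by rewrite /stair big_ord0.
rewrite stairS IH; last by apply: le_trans h; rewrite lerD2l ler_pM2r // ler_nat.
by rewrite h -natr1.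
Qed.

Lemma stair_lb (b e x : R) n : 0 < e -> b <= x -> b + e * stair b e x n <= x.
Proof.
move=> e0 bx; elim: n => [|n IH]; first by rewrite /stair big_ord0 mulr0 addr0.
rewrite stairS; have [h|_] := boolP (b + n.+1%:R * e <= x); last by rewrite mulr0n addr0.
rewrite mulr1n; have : e * stair b e x n <= e * n%:R by rewrite ler_pM2l // stair_le.
by rewrite -natr1 in h; lra.
Qed.

Lemma stair_ub (b e x : R) n : 0 < e -> x <= b + n%:R * e ->
  x <= b + e + e * stair b e x n.
Proof.
move=> e0; elim: n => [|n IH] h.
  by rewrite /stair big_ord0 mulr0 addr0 mul0r addr0 in h *; lra.
have : e * stair b e x n <= e * stair b e x n.+1.
  by rewrite ler_pM2l // stairS lerDl ler0n.
have [h1|h1] := leP x (b + n%:R * e); first by have := IH h1; lra.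
have -> : stair b e x n = n%:R by apply: stair_full => //; exact: ltW.
by rewrite -natr1 in h; lra.
Qed.

End stair.

Lemma le_measure_big_setU {d} {T : measurableType d} {R : realType}
    (mu : {measure set T -> \bar R}) (I : Type) (s : seq I) (p : pred I)
    (F : I -> set T) : (forall i, measurable (F i)) ->
  (mu (\big[setU/set0]_(i <- s | p i) F i) <= \sum_(i <- s | p i) mu (F i))%E.
Proof.
move=> mF; elim: s => [|i s IH]; first by rewrite !big_nil measure0.
rewrite !big_cons; case: (p i) => //.
apply: le_trans (measureU2 _ (mF i) (bigsetU_measurable _ _)) _ => //.
exact: leeD2l.
Qed.

Lemma sum_ffun_prod_bool {R : comNzRingType} t (a b : R) :
  \sum_(g : {ffun 'I_t -> bool}) \prod_(i < t) (if g i then a else b) = (a + b) ^+ t.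
Proof.
rewrite -(bigA_distr_bigA (fun (i : 'I_t) (x : bool) => if x then a else b)) /=.
by under eq_bigr do rewrite big_bool /=; rewrite prodr_const card_ord.
Qed.

Lemma chernoff_rate_lt1 {R : realType} (pi eta lam : R) :
  0 <= pi <= 1 -> 0 < eta -> 0 < lam -> lam * (1 + eta) = eta / 2 ->
  expR (- lam * (pi + eta)) * (expR lam * pi + (1 - pi)) < 1.
Proof.
move=> /andP[p0 p1] e0 l0 lam_eta.
have lam_lt1 : lam < 1.
  have h1 : 0 < 1 + eta by rewrite addr_gt0.
  by rewrite -(ltr_pM2r h1) mul1r lam_eta; lra.
have exp_lam_le : expR lam * (1 - lam) <= 1.
  have := expR_ge1Dx (- lam); rewrite expRN => h.
  by rewrite -(ler_pM2l (expR_gt0 lam)) mulfV ?gt_eqF ?expR_gt0 in h.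
have exp_tilt_ge := expR_ge1Dx (lam * (pi + eta)).
have tilt_lt : lam * (pi + eta) < eta.
  have : lam * pi <= lam * 1 by rewrite ler_pM2l.
  nra.
have exp_lam_pi : expR lam * pi * (1 - lam) <= pi by nra.
rewrite mulNr expRN mulrC ltr_pdivrMr ?expR_gt0 // mul1r; nra.
Qed.

Section frequency.
Context {d} {T : measurableType d} {R : realType} (P : probability T R).
Variables (f : nat -> T -> R) (B : set R) (pi eta : R).
Hypotheses (mB : measurable B) (mf : forall k, measurable_fun setT (f k)).
Hypothesis indep : mutually_independent P f.
Hypothesis PB : forall k, P (f k @^-1` B) = pi%:E.
Hypothesis eta_gt0 : 0 < eta.

Let mpre k C : measurable C -> measurable (f k @^-1` C).
Proof. by move=> mC; rewrite -[_ @^-1` _]setTI; apply: mf. Qed.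

Let pi_ge0 : 0 <= pi.
Proof. by rewrite -lee_fin -(PB 0); exact: measure_ge0. Qed.

Let pi_le1 : pi <= 1.
Proof. by rewrite -lee_fin -(PB 0); exact: probability_le1 (mpre 0 mB). Qed.

Definition pattern_set t (g : {ffun 'I_t -> bool}) (k : nat) : set R :=
  if insub k is Some i then (if g i then B else ~` B) else setT.

Definition pattern_event t (g : {ffun 'I_t -> bool}) :=
  \bigcap_(k in [set k | (k < t)%N]) (f k @^-1` pattern_set g k).

Let measurable_pattern_set t g k : measurable (@pattern_set t g k).
Proof.
by rewrite /pattern_set; case: insub => [i|] //; case: (g i) => //; exact: measurableC.
Qed.

Lemma measurable_pattern_event t g : measurable (@pattern_event t g).
Proof. by apply: bigcap_measurableType => k _; exact: mpre. Qed.

Lemma pattern_eventE t g :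
  P (@pattern_event t g) = (\prod_(i < t) (if g i then pi else 1 - pi))%:E.
Proof.
rewrite /pattern_event indep //.
rewrite -prodEFin; apply: eq_bigr => i _; rewrite /pattern_set valK.
case: (g i); first exact: PB.
by rewrite -preimage_setC probability_setC ?PB ?EFinB //; exact: mpre.
Qed.

Definition hits t w : R := \sum_(k < t) \1_B (f k w).

Definition pattern_of t w : {ffun 'I_t -> bool} := [ffun i : 'I_t => f i w \in B].

Lemma pattern_event_of t w : pattern_event (pattern_of t w) w.
Proof.
move=> k /= kt; rewrite /pattern_set insubT /= ffunE.
by case: ifPn => [/set_mem|/negP h /mem_set].
Qed.

Definition trues t (g : {ffun 'I_t -> bool}) : R := \sum_(i < t) (g i)%:R.

Lemma hits_pattern_of t w : hits t w = trues (pattern_of t w).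
Proof. by apply: eq_bigr => i _; rewrite ffunE indicE. Qed.

Definition excess t :=
  \big[setU/set0]_(g : {ffun 'I_t -> bool} | (pi + eta) * t%:R <= trues g) pattern_event g.

Lemma measurable_excess t : measurable (excess t).
Proof. by apply: bigsetU_measurable => g _; exact: measurable_pattern_event. Qed.

(* Chernoff: P(excess t) <= exp(-lam (pi + eta) t) E[exp(lam hits_t)] = rho^t,
   and this choice of lam makes rho < 1. *)
Let lam : R := eta / (2 * (1 + eta)).
Let rho : R := expR (- lam * (pi + eta)) * (expR lam * pi + (1 - pi)).

Let lam_gt0 : 0 < lam.
Proof. by rewrite /lam divr_gt0 // mulr_gt0 // addr_gt0. Qed.

Let rho_ge0 : 0 <= rho.
Proof. by rewrite /rho mulr_ge0 ?expR_ge0 // addr_ge0 ?mulr_ge0 ?expR_ge0 // subr_ge0. Qed.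

Let rho_lt1 : rho < 1.
Proof.
apply: chernoff_rate_lt1 => //; first by rewrite pi_ge0 pi_le1.
by rewrite /lam mulrAC -mulf_div divff ?mulr1 // gt_eqF // addr_gt0.
Qed.

Let P_excess_le t : (P (excess t) <= (rho ^+ t)%:E)%E.
Proof.
pose pr (g : {ffun 'I_t -> bool}) := \prod_(i < t) (if g i then pi else 1 - pi).
apply: le_trans (le_measure_big_setU _ _ _ (@measurable_pattern_event t)) _.
rewrite (eq_bigr (fun g => (pr g)%:E)); last by move=> g _; exact: pattern_eventE.
rewrite sumEFin lee_fin.
have pr_ge0 g : 0 <= pr g by apply: prodr_ge0 => i _; case: (g i); rewrite ?subr_ge0.
set c := lam * ((pi + eta) * t%:R).
apply: (@le_trans _ _ (\sum_g expR (- c) * (expR (lam * trues g) * pr g))).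
  rewrite big_mkcond /=; apply: ler_sum => g _; case: ifP => gg.
    rewrite mulrA -expRD -{1}[pr g]mul1r ler_wpM2r //.
    by apply: le_trans (expR_ge1Dx _); rewrite lerDl addrC subr_ge0 /c ler_pM2l.
  by rewrite !mulr_ge0 ?expR_ge0.
have tilt g : expR (lam * trues g) * pr g =
    \prod_(i < t) (if g i then expR lam * pi else 1 - pi).
  rewrite /trues mulr_sumr expR_sum -big_split /=.
  by apply: eq_bigr => i _; case: (g i); rewrite /= ?mulr1 ?mulr0 ?expR0 ?mul1r.
under eq_bigr do rewrite tilt.
rewrite -mulr_sumr sum_ffun_prod_bool /rho exprMn ler_wpM2r //.
  by rewrite exprn_ge0 // addr_ge0 ?mulr_ge0 ?expR_ge0 // subr_ge0.
by rewrite -expRM_natr /c !mulNr mulrA.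
Qed.

Lemma hits_eventually_lt :
  {ae P, forall w, exists t0, forall t, (t0 <= t)%N -> hits t w < (pi + eta) * t%:R}.
Proof.
have summable : (\sum_(0 <= t <oo) P (excess t) < +oo)%E.
  apply: le_lt_trans (lee_nneseries (fun t _ _ => measure_ge0 _ _)
    (fun t _ => P_excess_le t)) _.
  have -> : (fun n => \sum_(0 <= k < n) ((rho ^+ k)%:E)%E) =
      EFin \o series (geometric 1 rho).
    apply/funext => n /=; rewrite sumEFin /series /=; congr (_%:E).
    by apply: eq_bigr => k _; rewrite /geometric /= mul1r.
  rewrite EFin_lim ?ltry //; apply: is_cvg_geometric_series.
  by rewrite ger0_norm.
exists (lim_sup_set excess); split.
- by apply: bigcapT_measurable => n; apply: bigcup_measurable => k _; exact: measurable_excess.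
- exact: lim_sup_set_cvg0 measurable_excess summable.
move=> w /= Hw n _; apply: contrapT => Hn; apply: Hw; exists n => t nt.
rewrite ltNge; apply/negP => ct; apply: Hn; exists t => //.
rewrite /excess (bigD1 (pattern_of t w)) /=; last by rewrite -hits_pattern_of.
by left; exact: pattern_event_of.
Qed.

End frequency.

Lemma bounded_integrable {d} {T : measurableType d} {R : realType} (P : probability T R)
  (X : T -> R) (K : R) : measurable_fun setT X -> (forall w, `|X w| <= K) ->
  P.-integrable setT (EFin \o X).
Proof.
move=> mX XK; apply: measurable_bounded_integrable => //.
  exact: le_lt_trans (probability_le1 P measurableT) (ltry _).
exists K; split; first exact: num_real.
by move=> M KM w _ /=; apply: le_trans (XK w) (ltW KM).
Qed.

(* Cut [-K', K'] into [L] levels [c l] of width [eps].  Each sample is at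
   least [K' - eps * #(levels above it)], the long-run frequency of the samples
   below [c l] is at most [P (X < c l) + eta] (Chernoff), and the expectation
   is at most [K' + eps - eps * \sum_l P (X < c l)]; [eps] and [eta] are
   chosen so that the total loss [eps + L eps eta] is below [mu - a]. *)
Section mean_lower_bound.
Context {d} {T : measurableType d} {R : realType} (P : probability T R).
Variables (f : nat -> T -> R) (X : T -> R) (K a : R).
Hypotheses (mX : measurable_fun setT X) (mf : forall k, measurable_fun setT (f k)).
Hypothesis XK : forall w, `|X w| <= K.
Hypothesis indep : mutually_independent P f.
Hypothesis idd : forall k, identically_distributed P (f k) X.
Hypothesis a_lt_mean : a < fine (\int[P]_w (X w)%:E)%E.

Let mu : R := fine (\int[P]_w (X w)%:E)%E.
Let K' : R := `|K| + 1.
Let L : nat := (Num.truncn (4 * K' / (mu - a))).+1.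
Let eps : R := 2 * K' / L%:R.
Let eta : R := (mu - a) / (8 * K').
Let c (l : nat) : R := - K' + l.+1%:R * eps.
Let below (l : nat) : set R := `]-oo, c l[.
Let pb (l : nat) : R := fine (P (X @^-1` below l)).

Let K'_gt0 : 0 < K'. Proof. by rewrite ltr_pwDr. Qed.
Let mu_a_gt0 : 0 < mu - a. Proof. by rewrite subr_gt0. Qed.
Let eps_gt0 : 0 < eps. Proof. by rewrite divr_gt0 // mulr_gt0. Qed.
Let eta_gt0 : 0 < eta. Proof. by rewrite divr_gt0 // mulr_gt0. Qed.
Let L_eps : L%:R * eps = 2 * K'.
Proof. by rewrite mulrCA mulfV ?mulr1 // gt_eqF. Qed.

Let eps_le : eps <= (mu - a) / 2.
Proof.
have := truncnS_gt (4 * K' / (mu - a)); rewrite -/L ltr_pdivrMr // => h.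
by rewrite ler_pdivrMr //; nra.
Qed.

Let L_eps_eta : L%:R * eps * eta = (mu - a) / 4.
Proof. by rewrite L_eps /eta; field; rewrite gt_eqF. Qed.

Let XK' w : - K' <= X w <= K'.
Proof. by have := XK w; rewrite ler_norml /K' => /andP[]; have := ler_norm K; lra. Qed.

Let mpreX C : measurable C -> measurable (X @^-1` C).
Proof. by move=> mC; rewrite -[_ @^-1` _]setTI; apply: mX. Qed.

Let measurable_below l : measurable (below l). Proof. exact: measurable_itv. Qed.

Let P_below l : P (X @^-1` below l) = (pb l)%:E.
Proof. by rewrite /pb fineK // fin_num_measure //; exact: mpreX. Qed.

Let P_above l : (P : {measure set T -> \bar R}) (X @^-1` ~` below l) = (1 - pb l)%:E.
Proof.
have := probability_setC P (mpreX (measurable_below l)); rewrite preimage_setC => h.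
by apply: eq_trans h _; rewrite P_below EFinB.
Qed.

Let stair_above x : stair (- K') eps x L = \sum_(l < L) \1_(~` below l) x.
Proof.
by apply: eq_bigr => l _; rewrite indicC mem_setE in_itv /= -leNgt.
Qed.

Let indic_above l x : \1_(~` below l) x = 1 - \1_(below l) x :> R.
Proof. by rewrite indicC indicE; case: (x \in below l); rewrite ?subrr ?subr0. Qed.

Let mean_le_levels : mu <= K' + eps - eps * \sum_(l < L) pb l.
Proof.
pose above_ind (l : nat) w := (\1_(X @^-1` ~` below l) w : R)%:E.
pose psi w := ((- K' + eps)%:E + \sum_(l < L) (eps%:E * above_ind l w))%E.
have int_above l : P.-integrable setT (above_ind l).
  by apply: integrable_indic => //; apply: mpreX; exact: measurableC.
have int_term l : P.-integrable setT (fun w => eps%:E * above_ind l w)%E.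
  exact: integrableZl.
have int_sum : P.-integrable setT (fun w => \sum_(l < L) (eps%:E * above_ind l w))%E.
  by apply: integrable_sum => // l _.
have mu_le : (mu%:E <= \int[P]_w psi w)%E.
  rewrite /mu fineK; last by apply: integrable_fin_num => //; exact: bounded_integrable XK.
  apply: le_integral => //; first exact: bounded_integrable XK.
    by apply: integrableD => //; exact: finite_measure_integrable_cst.
  move=> w _; rewrite /psi sumEFin -EFinD lee_fin -mulr_sumr.
  have := @stair_ub _ (- K') eps (X w) L eps_gt0; rewrite stair_above.
  by apply; rewrite L_eps; have := XK' w; lra.
move: mu_le; rewrite integralD //; last exact: finite_measure_integrable_cst.
have PT : (P : {measure set T -> \bar R}) [set: T] = 1%E by exact: probability_setT.
rewrite integral_cst // PT mule1 integral_sum //.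
rewrite (eq_bigr (fun l : 'I_L => (eps * (1 - pb l))%:E)); last first.
  move=> l _; rewrite integralZl // integral_indic ?setIT //; last first.
    by apply: mpreX; exact: measurableC.
  by rewrite P_above -EFinM.
rewrite sumEFin -EFinD lee_fin -mulr_sumr sumrB sumr_const card_ord mulrBr.
by rewrite mulrC L_eps; lra.
Qed.

Let hits_below_eventually_lt : {ae P, forall w, forall l : 'I_L, exists t0,
  forall t, (t0 <= t)%N -> hits f (below l) t w < (pb l + eta) * t%:R}.
Proof.
apply: filter_forall => l; apply: hits_eventually_lt => // k.
by rewrite -P_below; exact: idd.
Qed.

Let samples_ge_ae : {ae P, forall w k, - K' <= f k w}.
Proof.
apply: ae_foralln => k; exists (f k @^-1` `]-oo, - K'[); split.
- by rewrite -[_ @^-1` _]setTI; apply: mf => //; exact: measurable_itv.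
- apply: eq_trans (idd k (measurable_itv `]-oo, - K'[)) _.
  have -> : X @^-1` `]-oo, - K'[ = set0.
    by apply/seteqP; split => // w /=; rewrite in_itv /=; have := XK' w; lra.
  exact: measure0.
- by move=> w /= h; rewrite in_itv /= ltNge; apply/negP.
Qed.

Let sample_ge_levels x : - K' <= x -> K' - eps * \sum_(l < L) \1_(below l) x <= x.
Proof.
move=> Kx; have := stair_lb L eps_gt0 Kx.
rewrite stair_above; under eq_bigr do rewrite indic_above.
by rewrite sumrB sumr_const card_ord mulrBr mulr_natr -mulr_natl L_eps; lra.
Qed.

Let smean_gt_of_hits_le w N : (0 < N)%N -> (forall k, - K' <= f k w) ->
    (forall l : 'I_L, hits f (below l) N w <= (pb l + eta) * N%:R) ->
  a < smean (fun k => f k w) N.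
Proof.
move=> N_gt0 f_ge hits_le; rewrite -(ltr0n R) in N_gt0.
set SP := \sum_(l < L) pb l.
have sum_ge : N%:R * K' - eps * \sum_(l < L) hits f (below l) N w <= \sum_(k < N) f k w.
  have -> : N%:R * K' - eps * \sum_(l < L) hits f (below l) N w =
      \sum_(k < N) (K' - eps * \sum_(l < L) \1_(below l) (f k w)).
    by rewrite sumrB sumr_const card_ord -mulr_sumr exchange_big /= mulr_natl.
  by apply: ler_sum => k _; exact: sample_ge_levels (f_ge k).
have hits_sum : \sum_(l < L) hits f (below l) N w <= (SP + L%:R * eta) * N%:R.
  apply: le_trans (ler_sum _ (fun l _ => hits_le l)) _.
  by rewrite -mulr_suml big_split /= sumr_const card_ord mulr_natl.
have margin : a < K' - eps * SP - L%:R * eps * eta.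
  have := mean_le_levels; rewrite -/SP L_eps_eta; have := eps_le; have := mu_a_gt0.
  by move: (eps * SP) => eps_SP; lra.
have hits_eps := ler_wpM2l (ltW eps_gt0) hits_sum.
rewrite -(ltr_pM2l N_gt0) in margin.
have expand : N%:R * (K' - eps * SP - L%:R * eps * eta) =
    N%:R * K' - eps * ((SP + L%:R * eta) * N%:R) by ring.
by rewrite /smean -(ltr_pM2l N_gt0) mulrA mulfV ?gt_eqF // mul1r; lra.
Qed.

Lemma smean_eventually_gt :
  {ae P, forall w, exists t0, forall t, (t0 <= t)%N -> a < smean (fun k => f k w) t.+1}.
Proof.
move: hits_below_eventually_lt samples_ge_ae; apply: filterS2 => w hits_lt f_ge.
have [t0 Ht0] := fin_all_exists hits_lt.
exists (\max_(l < L) t0 l) => t tT; apply: smean_gt_of_hits_le => // l.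
by apply/ltW/Ht0; exact: leq_trans (leq_bigmax l) (leqW tT).
Qed.

End mean_lower_bound.

Section composition.
Context {d} {T : measurableType d} {R : realType} (P : probability T R).
Variable g : R -> R.
Hypothesis mg : measurable_fun setT g.

Let measurable_preimage C : measurable C -> measurable (g @^-1` C).
Proof. by move=> mC; rewrite -[_ @^-1` _]setTI; exact: mg. Qed.

Lemma mutually_independent_comp (f : nat -> T -> R) :
  mutually_independent P f -> mutually_independent P (fun k => g \o f k).
Proof.
move=> indep N C mC.
exact: indep N (fun k => g @^-1` C k) (fun k => measurable_preimage (mC k)).
Qed.

Lemma identically_distributed_comp (Y Z : T -> R) :
  identically_distributed P Y Z -> identically_distributed P (g \o Y) (g \o Z).
Proof. by move=> YZ C mC; exact: YZ (measurable_preimage mC). Qed.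

End composition.

Lemma smean_eventually_lt {d} {T : measurableType d} {R : realType} (P : probability T R)
    (f : nat -> T -> R) (X : T -> R) (K b : R) :
  measurable_fun setT X -> (forall k, measurable_fun setT (f k)) ->
  (forall w, `|X w| <= K) -> mutually_independent P f ->
  (forall k, identically_distributed P (f k) X) ->
  fine (\int[P]_w (X w)%:E)%E < b ->
  {ae P, forall w, exists t0, forall t, (t0 <= t)%N -> smean (fun k => f k w) t.+1 < b}.
Proof.
move=> mX mf XK indep idd mean_lt.
have m_opp := @measurable_realfun.oppr_measurable R setT.
have : {ae P, forall w, exists t0, forall t, (t0 <= t)%N ->
    - b < smean (fun k => - f k w) t.+1}.
  apply: (@smean_eventually_gt _ _ _ P (fun k => -%R \o f k) (-%R \o X) K).
  - exact: measurableT_comp.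
  - by move=> k; exact: measurableT_comp.
  - by move=> w; rewrite /= normrN.
  - exact: mutually_independent_comp.
  - by move=> k; exact: identically_distributed_comp.
  - have -> : (\int[P]_w (- X w)%:E = - \int[P]_w (X w)%:E)%E.
      by rewrite -integralN //; exact/integrable_add_def/bounded_integrable/XK.
    by rewrite fineN ltrN2.
apply: filterS => w [t0 Ht]; exists t0 => t /Ht.
by rewrite /smean sumrN mulrN ltrN2.
Qed.

Lemma roundD_eq0 {R : realType} (D z : R) : 0 < D -> z < D / 2 -> roundD D z = 0.
Proof.
move=> D0 zD; have zD2 : z / D < 2^-1 by rewrite ltr_pdivrMr // mulrC; lra.
have : Num.floor (z / D + 2^-1) <= 0 by rewrite -ltzD1 floor_lt_int add0r; lra.
by rewrite /roundD => /max_l ->; rewrite mulr0.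
Qed.

(* Off the boundary set, [mu / D + 1/2] is either not an integer, so that its
   floor is locally constant, or a nonpositive integer, so that [roundD D]
   vanishes on a neighbourhood of [mu]. *)
Lemma roundD_locally_constant {R : realType} (D mu : R) : 0 < D -> ~ boundary_set D mu ->
  exists a b, [/\ a < mu, mu < b & forall z, a < z -> z < b -> roundD D z = roundD D mu].
Proof.
move=> D0 nb; have muE : mu = (mu / D) * D by rewrite divfK ?gt_eqF.
set v := mu / D in muE; set g := Num.floor (v + 2^-1).
have /andP[gl gu] := floor_itv (v + 2^-1); rewrite -/g intrD in gl gu.
have [gv|gv] := ltP g%:~R (v + 2^-1).
  exists ((g%:~R - 2^-1) * D), ((g%:~R + 2^-1) * D); split.
  - by rewrite [X in _ < X]muE ltr_pM2r //; lra.
  - by rewrite [X in X < _]muE ltr_pM2r //; lra.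
  move=> z h1 h2; rewrite /roundD -/v -/g; congr (_ * (Num.max _ _)%:~R).
  rewrite -[z](divfK (lt0r_neq0 D0)) !ltr_pM2r // in h1 h2.
  by apply: floor_def; rewrite intrD; apply/andP; split; lra.
have vg : v + 2^-1 = g%:~R by apply/eqP; rewrite eq_le gv gl.
have [g0|g1] := leP g 0.
  have muD : mu < D / 2 by rewrite muE; move: g0; rewrite -(ler_int R); nra.
  by exists (mu - 1), (D / 2); split => //; [lra | move=> z _ zD; rewrite !roundD_eq0].
exfalso; apply: nb; exists `|g - 1|%N.
rewrite natr_absz ger0_norm; last by rewrite subr_ge0 -gtz0_ge1.
by rewrite muE intrB -vg; field.
Qed.

Lemma roundD_smean_eventually_const {d} {T : measurableType d} {R : realType}
    (P : probability T R) (f : nat -> T -> R) (X : T -> R) (K D : R) :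
  measurable_fun setT X -> (forall k, measurable_fun setT (f k)) ->
  (forall w, `|X w| <= K) -> mutually_independent P f ->
  (forall k, identically_distributed P (f k) X) ->
  0 < D -> ~ boundary_set D (fine (\int[P]_w (X w)%:E)%E) ->
  {ae P, forall w, exists t0, forall t, (t0 <= t)%N ->
    roundD D (smean (fun k => f k w) t.+1) = roundD D (fine (\int[P]_w (X w)%:E)%E)}.
Proof.
move=> mX mf XK indep idd D0 /(roundD_locally_constant D0) [a [b [a_lt lt_b ab_const]]].
have := smean_eventually_gt mX mf XK indep idd a_lt.
have := smean_eventually_lt mX mf XK indep idd lt_b.
apply: filterS2 => w [t1 H1] [t2 H2]; exists (maxn t1 t2) => t tt.
by apply: ab_const; [apply: H2 | apply: H1]; apply: leq_trans tt; rewrite ?leq_maxl ?leq_maxr.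
Qed.

Theorem lemma4 (R : realType) (d : measure_display) (T : measurableType d)
  (P : probability T R) (n : nat) (E : rel 'I_n) (W : 'M[R]_n)
  (G : nat -> T -> {set 'I_n * 'I_n}) (p : R)
  (X : 'I_n -> {RV P >-> R}) (x : 'I_n -> nat -> {RV P >-> R}) (K D : R)
  (q : quantizer) (y1 : T -> 'cV[R]_n) :
  undirected_graph E -> connected_graph E ->
  weight_matrix_ok E W ->
  (* random undirected graphs N(t) = G (t-1), E(t) a subset of E *)
  (forall t w i j, (i, j) \in G t w -> E i j) ->
  (forall t w i j, ((i, j) \in G t w) = ((j, i) \in G t w)) ->
  (forall t S, measurable (G t @^-1` [set S])) ->
  0 < p ->
  (* Pr[(i,j) in E(t) | sigma(N(1),...,N(t-1))] >= p *)
  (forall t i j, E i j -> forall H : set (seq {set 'I_n * 'I_n}),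
     (p%:E * P [set w | H (history G t w)]
      <= P ([set w | H (history G t w)] `&` [set w | (i, j) \in G t w]))%E) ->
  (* samples: x i k = x_i(k+1), i.i.d. copies of X i, |X i| <= K *)
  (forall i w, `|X i w| <= K) ->
  (forall i, mutually_independent P (fun k => x i k)) ->
  (forall i k, identically_distributed P (x i k) (X i)) ->
  0 < D ->
  (forall i, ~ boundary_set D (fine 'E_P[X i])) ->
  {ae P, forall w, exists S : seq R, forall (t : nat) (i : 'I_n),
     ytraj q D W (fun s => G s w) (fun i k => x i k w) (y1 w) t i ord0 \in S}.
Proof.
move=> _ _ Wok _ _ _ _ _ XK indep idd D0 off_boundary.
have frozen : {ae P, forall w, forall i, exists t0, forall t, (t0 <= t)%N ->
    roundD D (smean (fun k => x i k w) t.+1) = roundD D (fine 'E_P[X i])}.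
  apply: filter_forall => i; rewrite expectation_def.
  apply: roundD_smean_eventually_const => //; last by rewrite -expectation_def.
apply: filterS frozen => w /fin_all_exists [t0 Ht0].
apply: (ytraj_finite_range Wok (T0 := \max_i t0 i) (zr := fun i => roundD D (fine 'E_P[X i]))).
by move=> i t tT; apply: Ht0; exact: leq_trans (leq_bigmax i) tT.
Qed.
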